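(* For a commutative ring $R$ the following are equivalent: (i) $T(R)$ is zero-dimensional; (ii) for each $f\in R$ there exists $n\geq 1$ with $\operatorname{Ann}(f^n)=\operatorname{Ann}(f^{n+1})$, and there exists $h\in\operatorname{Ann}(f^n)$ such that $\operatorname{Ann}(f^n)\cap\operatorname{Ann}(h)=0$; (iii) for each $f\in R$ there exist $n\geq 1$ and a non-zero-divisor $g\in R$ such that $f^n g=f^{2n}$.
   Context: $T(R)=S^{-1}R$ with $S$ the set of non-zero-divisors of $R$ is the total ring of fractions. Zero-dimensional means Krull dimension $0$ (every prime ideal is maximal). *)

From HB Require Import structures.
From mathcomp Require Import all_boot all_order all_algebra.
Set Implicit Arguments. Unset Strict Implicit. Unset Printing Implicit Defensive.
Import GRing.Theory.
Local Open Scope ring_scope.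

Definition nzd (R : comPzRingType) (s : R) : Prop := forall x : R, s * x = 0 -> x = 0.

Definition Ann (R : comPzRingType) (f : R) : R -> Prop := fun y => f * y = 0.

Lemma nzd1 (R : comPzRingType) : nzd (1 : R).
Proof. by move=> x; rewrite mul1r. Qed.

Lemma nzdM (R : comPzRingType) (s t : R) : nzd s -> nzd t -> nzd (s * t).
Proof. by move=> hs ht x; rewrite -mulrA => /hs /ht. Qed.

(* The total ring of fractions T(R) = S^{-1} R, S = non-zero-divisors,
   presented as a setoid: fractions r/s with s in S, where
   r/s = r'/s' iff r s' = r' s (no extra factor is needed since S consists
   of non-zero-divisors). *)
Record frac (R : comPzRingType) := Frac { fnum : R; fden : R; fden_nzd : nzd fden }.

Section Frac.
Variable R : comPzRingType.

Definition feq (a b : frac R) : Prop := fnum a * fden b = fnum b * fden a.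
Definition f0 : frac R := @Frac R 0 1 (@nzd1 R).
Definition f1 : frac R := @Frac R 1 1 (@nzd1 R).
Definition fadd (a b : frac R) : frac R :=
  @Frac R (fnum a * fden b + fnum b * fden a) (fden a * fden b)
        (nzdM (@fden_nzd R a) (@fden_nzd R b)).
Definition fmul (a b : frac R) : frac R :=
  @Frac R (fnum a * fnum b) (fden a * fden b) (nzdM (@fden_nzd R a) (@fden_nzd R b)).

Definition T_ideal (I : frac R -> Prop) : Prop :=
  [/\ forall a b, feq a b -> I a -> I b,
      I f0,
      forall a b, I a -> I b -> I (fadd a b) &
      forall a b, I b -> I (fmul a b)].

Definition T_prime (P : frac R -> Prop) : Prop :=
  [/\ T_ideal P, ~ P f1 & forall a b, P (fmul a b) -> P a \/ P b].

Definition T_maximal (M : frac R -> Prop) : Prop :=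
  [/\ T_ideal M, ~ M f1 &
      forall J, T_ideal J -> (forall x, M x -> J x) -> ~ J f1 ->
        forall x, J x -> M x].

Definition T_zero_dimensional : Prop :=
  forall P : frac R -> Prop, T_prime P -> T_maximal P.
End Frac.

From Pilot Require Import Defs.
From HB Require Import structures.
From mathcomp Require Import all_boot all_order all_algebra.
From mathcomp Require Import ring.
From mathcomp Require Import boolp classical_sets.
Set Implicit Arguments. Unset Strict Implicit. Unset Printing Implicit Defensive.
Import GRing.Theory.
Local Open Scope classical_set_scope.
Local Open Scope ring_scope.

(* (ii) <-> (iii) is elementary: from (ii) take g = f^n + h, from (iii) take
   h = g - f^n.  (iii) -> (i): for x = r/s in T(R), a = x^n and
   c = x^n - g/s^n satisfy a c = 0, so a prime P contains x (via a) or c; in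
   the second case an ideal J containing P and x contains a - c = g/s^n,
   a unit.  (i) -> (ii): if f^n t = f^(n+1) b has no solution with t a
   non-zero-divisor, then the multiplicative set of the f^n (1 - f u),
   u in T(R), avoids 0, hence (Zorn) some prime P of T(R) avoids it.  P is
   maximal and f is not in P, so 1 - c f lies in P for some c: a
   contradiction.  Such an equation yields (ii) with n + 1 and
   h = t^(n+1) - f^(n+1) b^(n+1). *)

Section AnnihilatorConditions.
Variable R : comPzRingType.
Implicit Types f t b y : R.

Definition ann_split f := exists n : nat, (1 <= n)%N /\
  (forall y, Ann (f ^+ n) y <-> Ann (f ^+ n.+1) y) /\
  (exists h : R, Ann (f ^+ n) h /\
     (forall y, Ann (f ^+ n) y -> Ann h y -> y = 0)).

Definition nzd_pi_regular f :=
  exists (n : nat) (g : R), (1 <= n)%N /\ nzd g /\ f ^+ n * g = f ^+ (2 * n).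

Lemma nzdX t : nzd t -> forall k, nzd (t ^+ k).
Proof.
move=> nzd_t; elim => [|k IHk]; first by rewrite expr0; exact: nzd1.
by rewrite exprS; exact: nzdM.
Qed.
#[global] Arguments nzdX [t] nzd_t k.

Lemma Ann_powS_stable f n :
  (forall y, Ann (f ^+ n) y <-> Ann (f ^+ n.+1) y) ->
  forall k y, f ^+ (n + k) * y = 0 -> f ^+ n * y = 0.
Proof.
move=> stable; elim=> [|k IHk] y; first by rewrite addn0.
rewrite addnS exprSr -mulrA => /IHk fny.
by apply/(stable y); rewrite /Ann exprSr -mulrA.
Qed.

Lemma ann_split_nzd_pi_regular f : ann_split f -> nzd_pi_regular f.
Proof.
move=> [n [n_gt0 [stable [h [fnh ann_h]]]]]; rewrite /Ann in fnh ann_h.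
exists n, (f ^+ n + h); do !split=> //; last first.
  by rewrite mulrDr fnh addr0 -exprD mul2n addnn.
move=> x gx.
have f2nx : f ^+ (n + n) * x = 0.
  rewrite exprD -mulrA -(mulr0 (f ^+ n)) -gx mulrDl mulrDr.
  by rewrite [f ^+ n * (h * x)]mulrA fnh mul0r addr0.
have fnx : f ^+ n * x = 0 := Ann_powS_stable stable f2nx.
by apply: ann_h => //; move: gx; rewrite mulrDl fnx add0r.
Qed.

Lemma nzd_pi_regular_ann_split f : nzd_pi_regular f -> ann_split f.
Proof.
move=> [n [g [n_gt0 [nzd_g fg]]]]; case: n n_gt0 fg => // m _ fg.
exists m.+1; do !split=> //.
- by rewrite /Ann [f ^+ m.+2]exprS -mulrA => ->; rewrite mulr0.
- move=> fy; apply: nzd_g; rewrite mulrCA mulrA fg.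
  by rewrite mul2n -addnn addSnnS exprD -mulrA [_ * y]fy mulr0.
- exists (g - f ^+ m.+1); split.
    by rewrite /Ann mulrBr fg -exprD mul2n addnn subrr.
  move=> y; rewrite /Ann => fy hy; apply: nzd_g.
  by move: hy; rewrite mulrBl fy subr0.
Qed.

Lemma pow_eq_iter f b t n k :
  f ^+ n * t = f ^+ n.+1 * b -> f ^+ n * t ^+ k = f ^+ (n + k) * b ^+ k.
Proof.
move=> ftb; elim: k => [|k IHk]; first by rewrite addn0 !expr0 !mulr1.
rewrite exprS mulrCA IHk.
transitivity (f ^+ k * b ^+ k * (f ^+ n * t)); first by rewrite exprD; ring.
by rewrite ftb addnS !exprS exprD; ring.
Qed.

Lemma ann_split_of_pow_eq f b t n :
  nzd t -> f ^+ n * t = f ^+ n.+1 * b -> ann_split f.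
Proof.
move=> nzd_t ftb.
have ftbS : f ^+ n.+1 * t = f ^+ n.+2 * b by rewrite exprS -mulrA ftb mulrA -exprS.
exists n.+1; do !split=> //.
- by rewrite /Ann [f ^+ n.+2]exprS -mulrA => ->; rewrite mulr0.
- move=> fy; apply: nzd_t.
  by rewrite mulrA (mulrC t) ftbS mulrAC fy mul0r.
- exists (t ^+ n.+1 - f ^+ n.+1 * b ^+ n.+1); split.
    by rewrite /Ann mulrBr (pow_eq_iter _ ftbS) mulrA -exprD subrr.
  move=> y; rewrite /Ann => fy hy; apply: (nzdX nzd_t n.+1 y).
  by move: hy; rewrite mulrBl mulrAC fy mul0r subr0.
Qed.

End AnnihilatorConditions.

Section TotalRingOfFractions.
Variable R : comPzRingType.
Implicit Types (a b c p x z : Defs.frac R) (I J M P S : set (Defs.frac R)).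

Lemma feq_sym a b : feq a b -> feq b a.
Proof. by rewrite /feq => ->. Qed.

Lemma feq_trans a b c : feq a b -> feq b c -> feq a c.
Proof.
rewrite /feq => eq_ab eq_bc; apply/eqP; rewrite -subr_eq0; apply/eqP.
apply: (@fden_nzd R b).
transitivity (fnum a * fden b * fden c - fnum c * fden b * fden a); first ring.
by rewrite eq_ab -eq_bc; ring.
Qed.

Lemma fadd_feq a a' b b' : feq a a' -> feq b b' -> feq (fadd a b) (fadd a' b').
Proof.
rewrite /feq /= => eq_a eq_b.
transitivity (fnum a * fden a' * (fden b * fden b')
              + fnum b * fden b' * (fden a * fden a')); first ring.
by rewrite eq_a eq_b; ring.
Qed.

Lemma fmul_feq a a' b b' : feq a a' -> feq b b' -> feq (fmul a b) (fmul a' b').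
Proof.
rewrite /feq /= => eq_a eq_b.
transitivity (fnum a * fden a' * (fnum b * fden b')); first ring.
by rewrite eq_a eq_b; ring.
Qed.

Definition adjoin I a : set (Defs.frac R) :=
  fun z => exists p c, I p /\ feq z (fadd p (fmul c a)).

Lemma sub_adjoin I a : I `<=` adjoin I a.
Proof. by move=> z Iz; exists z, (f0 R); split=> //; rewrite /feq /=; ring. Qed.

Lemma adjoin_self I a : T_ideal I -> adjoin I a a.
Proof. by case=> _ I0 _ _; exists (f0 R), (f1 R); split=> //; rewrite /feq /=; ring. Qed.

Lemma T_ideal_adjoin I a : T_ideal I -> T_ideal (adjoin I a).
Proof.
case=> _ I0 Iadd Imul; split.
- move=> x y eq_xy [p [c [Ip eq_x]]]; exists p, c; split=> //.
  exact: feq_trans (feq_sym eq_xy) eq_x.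
- by exists (f0 R), (f0 R); split=> //; rewrite /feq /=; ring.
- move=> x y [p [c [Ip eq_x]]] [q [d [Iq eq_y]]].
  exists (fadd p q), (fadd c d); split; first exact: Iadd.
  by apply: feq_trans (fadd_feq eq_x eq_y) _; rewrite /feq /=; ring.
- move=> b x [p [c [Ip eq_x]]].
  exists (fmul b p), (fmul b c); split; first exact: Imul.
  by apply: feq_trans (@fmul_feq b b _ _ erefl eq_x) _; rewrite /feq /=; ring.
Qed.

Lemma T_maximal_adjoin M a : T_maximal M -> ~ M a -> adjoin M a (f1 R).
Proof.
case=> Mid _ Mmax Ma; apply: contrapT => J1; apply: Ma.
by apply: (Mmax (adjoin M a)) => //;
  [exact: T_ideal_adjoin | exact: sub_adjoin | exact: adjoin_self].
Qed.

Lemma T_prime_of_pow P r s (nzd_s : nzd s) k (nzd_sk : nzd (s ^+ k)) :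
  T_prime P -> P (Frac (r ^+ k) nzd_sk) -> P (Frac r nzd_s).
Proof.
case=> -[Peq _ _ _] P1 Pmul; elim: k nzd_sk => [|k IHk] nzd_sk Prs.
  by case: P1; apply: Peq Prs; rewrite /feq /=; ring.
have : P (fmul (Frac r nzd_s) (Frac (r ^+ k) (nzdX nzd_s k))).
  by apply: Peq Prs; rewrite /feq /= !exprS; ring.
by case/Pmul => // /IHk.
Qed.

Lemma T_ideal_pow J r s (nzd_s : nzd s) k (nzd_sk : nzd (s ^+ k.+1)) :
  T_ideal J -> J (Frac r nzd_s) -> J (Frac (r ^+ k.+1) nzd_sk).
Proof.
case=> Jeq _ _ Jmul /(Jmul (Frac (r ^+ k) (nzdX nzd_s k))).
by apply: Jeq; rewrite /feq /= !exprS; ring.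
Qed.

Lemma T_ideal_nzd J g s (nzd_s : nzd s) :
  T_ideal J -> nzd g -> J (Frac g nzd_s) -> J (f1 R).
Proof.
case=> Jeq _ _ Jmul nzd_g /(Jmul (Frac s nzd_g)).
by apply: Jeq; rewrite /feq /=; ring.
Qed.

Lemma T_zero_dimensional_of_nzd_pi_regular :
  (forall f : R, nzd_pi_regular f) -> T_zero_dimensional R.
Proof.
move=> pi_reg P Pprime; have [Pid P1 Pmul] := Pprime; have [Peq P0 _ _] := Pid.
split=> // J Jid sPJ J1 [r s nzd_s] Jx.
have [n [g [n_gt0 [nzd_g rg]]]] := pi_reg r.
pose a := Frac (r ^+ n) (nzdX nzd_s n).
pose c := Frac (r ^+ n - g) (nzdX nzd_s n).
have /Pmul[Pa|Pc] : P (fmul a c).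
  by apply: Peq P0; rewrite /feq /= mul0r mulr1 mulrBr rg -exprD mul2n addnn subrr.
  exact: T_prime_of_pow Pprime Pa.
case: J1; case: n n_gt0 rg @a @c Pc => // m _ _ a c Pc.
have [Jeq _ Jadd Jmul] := Jid.
have Jag : J (fadd a (fmul (Frac (-1) (@nzd1 R)) c)).
  by apply: Jadd; [exact: T_ideal_pow | apply/Jmul/sPJ].
apply: (T_ideal_nzd Jid nzd_g (nzd_s := nzdX nzd_s m.+1)).
by apply: Jeq Jag; rewrite /feq /=; ring.
Qed.

Definition T_ideal_avoiding S I := T_ideal I /\ forall z, I z -> ~ S z.

Lemma T_ideal_zero : T_ideal (fun z : Defs.frac R => fnum z = 0).
Proof.
split=> //.
- move=> a b eq_ab a0; apply: (@fden_nzd R a).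
  by rewrite mulrC -eq_ab a0 mul0r.
- by move=> a b /= -> ->; rewrite !mul0r addr0.
- by move=> a b /= ->; rewrite mulr0.
Qed.

Lemma T_ideal_avoiding_bigcup S (F : set (set (Defs.frac R))) X0 z0 :
  (forall X z, F X -> X z -> T_ideal_avoiding S X) -> total_on F subset ->
  F X0 -> X0 z0 -> T_ideal_avoiding S (\bigcup_(X in F) X).
Proof.
move=> Favoid Ftot FX0 X0z0.
have Fid X z : F X -> X z -> T_ideal X by move=> FX /(Favoid _ _ FX) [].
split; first split.
- move=> a b eq_ab [X FX Xa]; exists X => //.
  by have [Xeq _ _ _] := Fid _ _ FX Xa; exact: Xeq eq_ab Xa.
- by exists X0 => //; have [] := Fid _ _ FX0 X0z0.
- move=> a b [X FX Xa] [Y FY Yb].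
  have [XY|YX] := Ftot _ _ FX FY.
    by exists Y => //; have [_ _ Yadd _] := Fid _ _ FY Yb; apply: Yadd (XY _ Xa) Yb.
  by exists X => //; have [_ _ Xadd _] := Fid _ _ FX Xa; apply: Xadd Xa (YX _ Yb).
- move=> a b [X FX Xb]; exists X => //.
  by have [_ _ _ Xmul] := Fid _ _ FX Xb; exact: Xmul.
- by move=> z [X FX Xz]; have [_] := Favoid _ _ FX Xz; apply.
Qed.

Lemma exists_T_prime_avoiding S :
  S (f1 R) -> (forall a b, S a -> S b -> S (fmul a b)) ->
  (forall z, S z -> fnum z <> 0) ->
  exists P, T_prime P /\ forall z, P z -> ~ S z.
Proof.
move=> S1 Smul S_neq0.
(* The empty set is admitted so that the empty chain has an upper bound. *)
pose empty_or_avoiding X := forall z, X z -> T_ideal_avoiding S X.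
have [A [A_avoid Amax]] : exists A, empty_or_avoiding A /\
    forall B, A `<` B -> ~ empty_or_avoiding B.
  apply: Zorn_bigcup => F FF Ftot z [X0 FX0 X0z].
  exact: T_ideal_avoiding_bigcup (fun X z FX => FF X FX z) Ftot FX0 X0z.
have [Aid Adisj] : T_ideal_avoiding S A.
  apply: (A_avoid (f0 R)); apply: contrapT => A0.
  have I0_avoid : T_ideal_avoiding S (fun z => fnum z = 0).
    by split; [exact: T_ideal_zero | move=> z z0 /S_neq0].
  apply: (Amax _ _ (fun _ _ => I0_avoid)); split=> [z Az|/(_ (f0 R) erefl)//].
  by case: A0; have [[]] := A_avoid z Az.
have [Aeq _ Aadd Amul] := Aid.
have meet a : ~ A a -> exists z, adjoin A a z /\ S z.
  move=> Aa; apply: contrapT => no_meet; apply: (Amax (adjoin A a)).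
    by split; [exact: sub_adjoin | move/(_ a (adjoin_self a Aid))].
  split; first exact: T_ideal_adjoin.
  by move=> z' Jz' Sz'; apply: no_meet; exists z'.
exists A; split=> //; split=> [//||a b Aab]; first by move/Adisj.
apply: contrapT => /not_orP[/meet[z1 [[p1 [c1 [Ap1 eq1]]] Sz1]]].
move=> /meet[z2 [[p2 [c2 [Ap2 eq2]]] Sz2]].
apply: (Adisj (fmul z1 z2) _ (Smul _ _ Sz1 Sz2)).
have AW : A (fadd (fmul (fadd p1 (fmul c1 a)) p2)
                  (fadd (fmul (fmul c2 b) p1) (fmul (fmul c1 c2) (fmul a b)))).
  by apply: (Aadd); [exact: Amul | apply: (Aadd); exact: Amul].
apply: Aeq AW; apply: feq_sym; apply: feq_trans (fmul_feq eq1 eq2) _.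
by rewrite /feq /=; ring.
Qed.

Lemma pow_eq_of_T_zero_dimensional : T_zero_dimensional R ->
  forall f : R, exists n (b t : R), nzd t /\ f ^+ n * t = f ^+ n.+1 * b.
Proof.
move=> zdim f; apply: contrapT => no_pow_eq.
pose S z := exists n r t (nzd_t : nzd t), feq z (Frac (f ^+ n * (t - f * r)) nzd_t).
have S1 : S (f1 R) by exists 0%N, 0, 1, (@nzd1 R); rewrite /feq /=; ring.
have Smul a b : S a -> S b -> S (fmul a b).
  move=> [n [r1 [t1 [nzd_t1 eq_a]]]] [m [r2 [t2 [nzd_t2 eq_b]]]].
  exists (n + m)%N, (r1 * t2 + r2 * t1 - f * r1 * r2), (t1 * t2), (nzdM nzd_t1 nzd_t2).
  by apply: feq_trans (fmul_feq eq_a eq_b) _; rewrite /feq /= exprD; ring.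
have S_neq0 z : S z -> fnum z <> 0.
  move=> [n [r [t [nzd_t eq_z]]]] z0; apply: no_pow_eq; exists n, r, t; split=> //.
  have : f ^+ n * (t - f * r) = 0.
    by apply: (@fden_nzd R z); rewrite mulrC -eq_z z0 mul0r.
  by move/eqP; rewrite mulrBr subr_eq0 exprSr -mulrA => /eqP.
have [P [Pprime Pdisj]] := exists_T_prime_avoiding S1 Smul S_neq0.
pose x := Frac f (@nzd1 R).
have Sx : S x by exists 1%N, 0, 1, (@nzd1 R); rewrite /feq /=; ring.
have [p [c [Pp]]] := T_maximal_adjoin (zdim P Pprime) (fun Px => Pdisj x Px Sx).
rewrite /feq /= => eq1; apply: (Pdisj p Pp).
exists 0%N, (fnum c), (fden c), (@fden_nzd R c); rewrite /feq /=.
apply/eqP; rewrite -subr_eq0; apply/eqP.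
transitivity ((fnum p * (fden c * 1) + fnum c * f * fden p) * 1
              - 1 * (fden p * (fden c * 1))); first ring.
by rewrite eq1 subrr.
Qed.

End TotalRingOfFractions.

Theorem lemma3p2 (R : comPzRingType) :
  (T_zero_dimensional R <->
   (forall f : R, exists n : nat, (1 <= n)%N /\
      (forall y, Ann (f ^+ n) y <-> Ann (f ^+ n.+1) y) /\
      (exists h : R, Ann (f ^+ n) h /\
         (forall y, Ann (f ^+ n) y -> Ann h y -> y = 0))))
  /\
  ((forall f : R, exists n : nat, (1 <= n)%N /\
      (forall y, Ann (f ^+ n) y <-> Ann (f ^+ n.+1) y) /\
      (exists h : R, Ann (f ^+ n) h /\
         (forall y, Ann (f ^+ n) y -> Ann h y -> y = 0)))
   <->
   (forall f : R, exists (n : nat) (g : R), (1 <= n)%N /\ nzd g /\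
      f ^+ n * g = f ^+ (2 * n))).
Proof.
have split_iff_regular : (forall f : R, ann_split f) <-> (forall f : R, nzd_pi_regular f).
  split=> all_f f;
    [exact: ann_split_nzd_pi_regular (all_f f) | exact: nzd_pi_regular_ann_split (all_f f)].
split; last exact: split_iff_regular.
split=> [zdim f | /split_iff_regular].
  have [n [b [t [nzd_t ftb]]]] := pow_eq_of_T_zero_dimensional zdim f.
  exact: ann_split_of_pow_eq nzd_t ftb.
exact: T_zero_dimensional_of_nzd_pi_regular.
Qed.
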